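(* Let $\Phi(x,y)$ be a standard symmetric polynomial of partial degree $d$ and let $H$ be a finite, connected, $d$-regular graph that is strongly $\Phi$-polynomial. Then $G(\Phi)^*$ is vertex-transitive. In particular, $H$ is vertex-transitive.
   Context: For symmetric $\Phi(x,y)\in\mathbb{C}[x,y]$ of partial degree $d$ (degree $d$ in $y$), $G(\Phi)$ has vertex set $\mathbb{C}$, the neighbours of $u$ being the roots of $\Phi(u,y)$ (edges = points of $\mathbb{V}(\Phi)$). A component is singular if it contains a loop ($\Phi(u,u)=0$), a multiple edge (multiple root of $\Phi(u,y)$) or a defective vertex (leading coefficient in $y$ of $\Phi(u,y)$ vanishes). $\Phi$ is standard if it is squarefree, $\Phi(x,x)\not\equiv 0$, and $\Phi$ has no nonconstant factor depending only on $x$ (or only on $y$); $G(\Phi)^*$ is $G(\Phi)$ with its finitely many singular components removed. $H$ is $\Phi$-polynomial if it is isomorphic to some component of $G(\Phi)^*$, and strongly $\Phi$-polynomial if it is isomorphic to every component of $G(\Phi)^*$. *)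

(* The complex numbers are modelled as R[i] for an arbitrary
   R : realType (every realType is the real line, up to isomorphism). *)
From HB Require Import structures.
From mathcomp Require Import all_boot all_order all_algebra.
From mathcomp Require Import fingroup perm reals complex.
From Stdlib Require Import Relation_Operators.
Set Implicit Arguments.
Unset Strict Implicit.
Unset Printing Implicit Defensive.
Import Order.TTheory GRing.Theory Num.Theory.
Local Open Scope ring_scope.

Section PhiGraph.
Variable R : realType.
Local Notation C := (R[i]).

(* A bivariate polynomial Phi(x,y) is an element of {poly {poly C}}:
   the outer variable is y, the coefficients are polynomials in x. *)

Definition specX (Phi : {poly {poly C}}) (u : C) : {poly C} :=
  map_poly (fun q : {poly C} => q.[u]) Phi.

Definition evalXY (Phi : {poly {poly C}}) (u v : C) : C := (specX Phi u).[v].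

Definition symmetricXY (Phi : {poly {poly C}}) : Prop := swapXY Phi = Phi.

Definition partial_degree (Phi : {poly {poly C}}) (d : nat) : Prop :=
  size Phi = d.+1.

Definition divXY (q Phi : {poly {poly C}}) : Prop := exists r, Phi = q * r.

Definition squarefreeXY (Phi : {poly {poly C}}) : Prop :=
  forall q : {poly {poly C}}, divXY (q * q) Phi -> q \is a GRing.unit.

Definition standard (Phi : {poly {poly C}}) : Prop :=
  [/\ squarefreeXY Phi,
      Phi.['X] != 0,   (* Phi(x,x) is not identically 0 *)
      (forall q : {poly C}, divXY q%:P Phi -> (size q <= 1)%N)  (* no factor in x only *)
    & (forall q : {poly C}, divXY (q ^:P) Phi -> (size q <= 1)%N) (* no factor in y only *)].

Definition adjG (Phi : {poly {poly C}}) (u v : C) : Prop := evalXY Phi u v = 0.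

Definition reachG (Phi : {poly {poly C}}) : C -> C -> Prop :=
  clos_refl_trans C (adjG Phi).

(* loop, multiple edge, or defective vertex at u *)
Definition singular_vertex (Phi : {poly {poly C}}) (u : C) : Prop :=
  [\/ evalXY Phi u u = 0,
      (exists v : C, (('X - v%:P) ^+ 2 %| specX Phi u)%R)
    | (lead_coef Phi).[u] = 0].

Definition singular_comp (Phi : {poly {poly C}}) (u : C) : Prop :=
  exists w, reachG Phi u w /\ singular_vertex Phi w.

Definition Gstar_vertex (Phi : {poly {poly C}}) (u : C) : Prop :=
  ~ singular_comp Phi u.

Definition Gstar_automorphism (Phi : {poly {poly C}}) (f : C -> C) : Prop :=
  [/\ forall a, Gstar_vertex Phi a -> Gstar_vertex Phi (f a),
      forall a b, Gstar_vertex Phi a -> Gstar_vertex Phi b -> f a = f b -> a = b,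
      forall b, Gstar_vertex Phi b -> exists2 a, Gstar_vertex Phi a & f a = b
    & forall a b, Gstar_vertex Phi a -> Gstar_vertex Phi b ->
        (adjG Phi (f a) (f b) <-> adjG Phi a b)].

Definition Gstar_vertex_transitive (Phi : {poly {poly C}}) : Prop :=
  forall u v, Gstar_vertex Phi u -> Gstar_vertex Phi v ->
    exists f, Gstar_automorphism Phi f /\ f u = v.

Definition iso_to_component (T : finType) (e : rel T)
    (Phi : {poly {poly C}}) (u : C) : Prop :=
  exists f : T -> C,
    [/\ injective f,
        (forall v, reachG Phi u v <-> exists a, f a = v)
      & forall a b, e a b <-> adjG Phi (f a) (f b)].

Definition strongly_Phi_polynomial (T : finType) (e : rel T)
    (Phi : {poly {poly C}}) : Prop :=
  forall u, Gstar_vertex Phi u -> iso_to_component e Phi u.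

End PhiGraph.

Definition simple_graph (T : finType) (e : rel T) : Prop :=
  symmetric e /\ irreflexive e.

Definition connected_graph (T : finType) (e : rel T) : Prop :=
  (0 < #|T|)%N /\ forall x y, connect e x y.

Definition regular_graph (T : finType) (e : rel T) (d : nat) : Prop :=
  forall x, #|[set y | e x y]| = d.

Definition vertex_transitive (T : finType) (e : rel T) : Prop :=
  forall x y, exists s : {perm T}, (forall a b, e (s a) (s b) = e a b) /\ s x = y.

(* Fix a vertex [c] of [H]. The set of vertices [x] of [G(Phi)] such that some isomorphism
   from [H] onto the component of [x] sends [c] to [x] is definable in the first-order theory
   of the algebraically closed field C, hence finite or cofinite by quantifier elimination.
   It is not finite: only finitely many vertices are singular, components are countable and
   C is not, so infinitely many components of [G(Phi)^*] avoid any finite set, and each of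
   them is a copy of [H]. Hence, given vertices [a] and [b] of [H], a generic vertex [u] is
   the image of [a] under some isomorphism [g] and of [b] under some isomorphism [h], and
   [h^-1 \o g] is an automorphism of [H] sending [a] to [b]. Finally, for vertices [u] and
   [v] of [G(Phi)^*], exchanging their components along their isomorphisms with [H], twisted
   by an automorphism of [H] matching [u] with [v], is an automorphism of [G(Phi)^*]. *)

From mathcomp Require Import all_boot all_order all_algebra all_field.
From mathcomp Require Import fingroup perm reals complex ring.
From mathcomp Require Import boolp classical_sets cardinality ereal measure lebesgue_measure.
From Stdlib Require Import Relation_Operators.
Set Implicit Arguments.
Unset Strict Implicit.
Unset Printing Implicit Defensive.
Import Order.TTheory GRing.Theory Num.Theory.
Local Open Scope ring_scope.

Section Uncountable.
Variable R : realType.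
Local Open Scope classical_set_scope.

(* A countable set of reals is Lebesgue-null, whereas [0, 1] has measure 1. *)
Lemma real_not_enumerable (f : nat -> R) : exists x : R, forall k, f k != x.
Proof.
apply: contrapT => no_miss.
have range_f : range f = [set: R].
  apply/seteqP; split => // x _; apply: contrapT => nfx; apply: no_miss.
  by exists x => k; apply/eqP => fkx; apply: nfx; exists k.
have countable_range : countable (range f) by exact: card_image_le.
have := countable_lebesgue_measure0 countable_range.
rewrite range_f => null_setT.
have : (lebesgue_measure (`[0%R, 1%R]%classic : set R) <= lebesgue_measure [set: R])%E.
  by apply: le_measure; rewrite ?inE //; exact: measurable_itv.
by rewrite null_setT lebesgue_measure_itv /= lte01 oppr0 adde0 lee_fin ler10.
Qed.

Lemma complex_not_enumerable (f : nat -> R[i]) : exists x : R[i], forall k, f k != x.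
Proof.
have [r miss_r] := real_not_enumerable (fun k => complex.Re (f k)).
by exists (complex.Complex r 0) => k; apply: contraNneq (miss_r k) => ->.
Qed.

End Uncountable.

Section Definable.
Variable F : closedFieldType.
Local Notation formula := (GRing.formula F).

Definition cofinitely_constant (P : pred F) :=
  exists (s : seq F) (b : bool), forall x, x \notin s -> P x = b.

Lemma roots_in_seq (p : {poly F}) : p != 0 -> exists s : seq F, forall x, root p x -> x \in s.
Proof.
move=> p0; have [r ->] := closed_field_poly_normal p.
by exists r => x; rewrite rootZ ?lead_coef_eq0 // root_prod_XsubC.
Qed.

Lemma eval_rterm_poly (t : GRing.term F) : GRing.rterm t ->
  exists p : {poly F}, forall x, GRing.eval [:: x] t = p.[x].
Proof.
elim: t => /=.
- case=> [|i] _; first by exists 'X => x; rewrite hornerX.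
  by exists 0 => x; rewrite horner0 /= nth_nil.
- by move=> c _; exists c%:P => x; rewrite hornerC.
- by move=> n _; exists n%:R => x; rewrite -polyC_natr hornerC.
- move=> t1 IH1 t2 IH2 /andP[/IH1 [p1 h1] /IH2 [p2 h2]].
  by exists (p1 + p2) => x; rewrite hornerD h1 h2.
- by move=> t1 IH1 /IH1 [p1 h1]; exists (- p1) => x; rewrite hornerN h1.
- by move=> t1 IH1 n /IH1 [p1 h1]; exists (p1 *+ n) => x; rewrite hornerMn h1.
- move=> t1 IH1 t2 IH2 /andP[/IH1 [p1 h1] /IH2 [p2 h2]].
  by exists (p1 * p2) => x; rewrite hornerM h1 h2.
- by [].
- by move=> t1 IH1 n /IH1 [p1 h1]; exists (p1 ^+ n) => x; rewrite horner_exp h1.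
Qed.

Lemma cofinitely_constant_op2 (op : bool -> bool -> bool) (P Q : pred F) :
  cofinitely_constant P -> cofinitely_constant Q ->
  cofinitely_constant (fun x => op (P x) (Q x)).
Proof.
move=> [s1 [b1 P_s1]] [s2 [b2 Q_s2]]; exists (s1 ++ s2), (op b1 b2) => x.
by rewrite mem_cat negb_or => /andP[/P_s1 -> /Q_s2 ->].
Qed.

Lemma qf_eval_cofinitely_constant (f : formula) : GRing.qf_form f -> GRing.rformula f ->
  cofinitely_constant (fun x => GRing.qf_eval [:: x] f).
Proof.
elim: f => //=.
3-5: by move=> f1 IH1 f2 IH2 /andP[q1 q2] /andP[r1 r2];
  exact: (cofinitely_constant_op2 _ (IH1 q1 r1) (IH2 q2 r2)).
- by move=> b _ _; exists [::], b.
- move=> t1 t2 _ /andP[/eval_rterm_poly [p1 h1] /eval_rterm_poly [p2 h2]].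
  have [/eqP|p12_neq0] := eqVneq (p1 - p2) 0.
    by rewrite subr_eq0 => /eqP p12; exists [::], true => x _; rewrite h1 h2 p12 eqxx.
  have [s roots_s] := roots_in_seq p12_neq0; exists s, false => x; apply: contraNF.
  by rewrite h1 h2 => /eqP p12x; apply: roots_s; rewrite /root hornerD hornerN p12x subrr.
- by move=> f1 IH1 q1 r1; have [s [b Hs]] := IH1 q1 r1; exists s, (~~ b) => x /Hs ->.
Qed.

Lemma definable_finite_or_cofinite (f : formula) : exists s : seq F,
  (forall x, x \notin s -> GRing.holds [:: x] f) \/ (forall x, GRing.holds [:: x] f -> x \in s).
Proof.
have rf := GRing.to_rform_rformula f.
have /andP[qf rq] := GRing.quantifier_elim_wf (@ClosedFieldQE.wf_ex_elim F) rf.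
have [s [b Hs]] := qf_eval_cofinitely_constant qf rq.
have holdsE x : GRing.holds [:: x] f <-> GRing.qf_eval [:: x]
    (GRing.quantifier_elim (@ClosedFieldQE.ex_elim F) (GRing.to_rform f)).
  have QE := GRing.quantifier_elim_rformP (@ClosedFieldQE.wf_ex_elim F)
      (ClosedFieldQE.holds_ex_elim (@solve_monicpoly F)) [:: x] rf.
  by split => [/GRing.to_rformP/QE | /QE/GRing.to_rformP].
exists s; case: b Hs => Hs; [left => x /Hs /holdsE // | right => x /holdsE].
by apply: contraLR => /Hs ->.
Qed.

End Definable.

Lemma lead_coef_deriv (R : idomainType) (p : {poly R}) : (size p).-1%:R != 0 :> R ->
  lead_coef p^`() = lead_coef p *+ (size p).-1.
Proof.
move=> n0; have sp : (1 < size p)%N by case: (size p) n0 => [|[|]]; rewrite ?eqxx.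
have coef_m : p^`()`_(size p).-2 = lead_coef p *+ (size p).-1.
  by rewrite coef_deriv lead_coefE; case: (size p) sp => [|[|]].
have lc_neq0 : lead_coef p *+ (size p).-1 != 0.
  by rewrite -mulr_natr mulf_neq0 // lead_coef_eq0 -size_poly_gt0 ltnW.
have size_d : size p^`() = (size p).-1.
  apply/eqP; rewrite eqn_leq -ltnS prednK ?lt_size_deriv -?size_poly_gt0 ?(ltnW sp) //=.
  have -> : (size p).-1 = (size p).-2.+1 by case: (size p) sp => [|[|]].
  by rewrite ltnNge; apply: contra lc_neq0 => /leq_sizeP d0; rewrite -coef_m d0.
by rewrite lead_coefE size_d -coef_m.
Qed.

Section PhiAlgebra.
Variable R : realType.
Local Notation C := (R[i]).
Implicit Types (Phi P H : {poly {poly C}}) (u v w : C).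

Lemma specXE Phi u : specX Phi u = map_poly (horner_eval u) Phi.
Proof. by []. Qed.

Lemma specXM Phi P u : specX (Phi * P) u = specX Phi u * specX P u.
Proof. by rewrite !specXE rmorphM. Qed.

Lemma pnatr_poly_eq0 n : (n%:R == 0 :> {poly C}) = (n == 0%N).
Proof. by rewrite -polyC_natr polyC_eq0 pnatr_eq0. Qed.

Lemma evalXY_sym Phi u v : symmetricXY Phi -> evalXY Phi u v = evalXY Phi v u.
Proof.
move=> sym; rewrite /evalXY !specXE -!horner_swapXY sym.
by rewrite -[Phi in RHS]sym horner2_swapXY.
Qed.

Lemma evalXY_diag Phi w : evalXY Phi w w = Phi.['X].[w].
Proof.
by have := horner_map (horner_eval w) Phi 'X; rewrite /= /horner_eval hornerX => <-.
Qed.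

Lemma specX_eq0_factor P w : specX P w = 0 ->
  exists2 P1, P = ('X - w%:P)%:P * P1 & size P1 = size P.
Proof.
move=> Pw0; set q := 'X - w%:P.
have q_neq0 : q != 0 by rewrite polyXsubC_eq0.
pose P1 := map_poly (fun c => c %/ q) P.
have P_factor : P = q%:P * P1.
  apply/polyP => i; rewrite coefCM coef_map_id0 ?div0p //.
  have Pi_w : root P`_i w.
    by move/polyP: Pw0 => /(_ i); rewrite specXE coef_map coef0 => /eqP.
  by rewrite mulrC divpK // dvdp_XsubCl.
by exists P1; rewrite // [in RHS]P_factor size_Cmul // polyC_eq0.
Qed.

Lemma standard_specX_neq0 Phi w : standard Phi -> specX Phi w != 0.
Proof.
case=> _ _ no_x_factor _; apply/negP => /eqP /specX_eq0_factor [P1 Phi_factor _].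
have : (size ('X - w%:P : {poly C})%R <= 1)%N by apply: no_x_factor; exists P1.
by rewrite size_XsubC.
Qed.

(* Gauss's lemma: a nonconstant square factor survives cancelling a constant in x. *)
Lemma polyC_sqr_factor_cancel Phi (a : {poly C}) P H : a != 0 ->
  a%:P * Phi = P * P * H -> (1 < size P)%N ->
  exists2 Q : {poly {poly C}}, (1 < size Q)%N & divXY (Q * Q) Phi.
Proof.
move: {2}(size a) (leqnn (size a)) => n; elim: n a P H => [|n IH] a P H sa a0 E sP.
  by move: a0; rewrite -size_poly_eq0; move: sa; rewrite leqn0 => /eqP ->.
have [sa1|sa1] := eqVneq (size a) 1%N.
  have a_unit : a%:P \is a GRing.unit.
    rewrite poly_unitE size_polyC a0 coefC /= poly_unitE sa1 eqxx unitfE /=.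
    by move: a0; rewrite -lead_coef_eq0 lead_coefE sa1.
  exists P => //; exists (H * (a%:P)^-1).
  by rewrite -[LHS](mulKr a_unit) E [in LHS]mulrC [RHS]mulrA.
have [w a_w] := closed_rootP _ sa1.
have [a' Ea] := factor_theorem _ _ a_w.
have a'0 : a' != 0 by apply: contraNneq a0; rewrite Ea => ->; rewrite mul0r.
have sa' : (size a' <= n)%N.
  by move: sa; rewrite Ea size_Mmonic ?monicXsubC // size_XsubC addn2.
set q := 'X - w%:P.
have q_neq0 : q%:P != 0 :> {poly {poly C}} by rewrite polyC_eq0 polyXsubC_eq0.
have : specX P w * specX P w * specX H w = 0.
  rewrite -!specXM -E specXM specXE map_polyC /= /horner_eval (rootP a_w).
  by rewrite polyC0 mul0r.
move/eqP; rewrite !mulf_eq0 orbb => /orP [] /eqP /specX_eq0_factor.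
  move=> [P1 EP sP1]; apply: (IH a' P1 (q%:P * H)) => //; last by rewrite sP1.
  apply: (mulfI q_neq0); transitivity (a%:P * Phi); first by rewrite Ea polyCM /q; ring.
  by rewrite E EP /q; ring.
move=> [H1 EH _]; apply: (IH a' P H1) => //.
apply: (mulfI q_neq0); transitivity (a%:P * Phi); first by rewrite Ea polyCM /q; ring.
by rewrite E EH /q; ring.
Qed.

Lemma standard_sqr_ndvdp Phi (P : {poly {poly C}}) : standard Phi -> size P != 1%N ->
  ~~ Pdiv.Idomain.dvdp (P ^+ 2) Phi.
Proof.
move=> st sP; apply/negP => dvd_P2.
have Phi0 : Phi != 0 by case: st => _ + _ _; apply: contraNneq => ->; rewrite horner0.
have P0 : P != 0.
  by apply: contraNneq Phi0 => P0; move: dvd_P2; rewrite P0 expr0n Pdiv.Idomain.dvd0p.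
have sP1 : (1 < size P)%N.
  by move: sP P0; rewrite -size_poly_eq0; case: (size P) => [|[|]].
move: dvd_P2; rewrite Pdiv.Idomain.dvdp_eq => /eqP E.
set c := _ ^+ _ in E.
have c0 : c != 0 by apply: Pdiv.Idomain.lc_expn_scalp_neq0.
have [Q sQ [r Er]] : exists2 Q : {poly {poly C}}, (1 < size Q)%N & divXY (Q * Q) Phi.
  apply: (@polyC_sqr_factor_cancel Phi c P (Pdiv.Idomain.divp Phi (P ^+ 2))) => //.
  by rewrite mul_polyC E mulrC expr2.
case: st => squarefree _ _ _.
have : Q \is a GRing.unit by apply: squarefree; exists r.
by rewrite poly_unitE => /andP [/eqP sQ1 _]; move: sQ; rewrite sQ1.
Qed.

(* [Phi] is separable in y over C(x), as C has characteristic 0. *)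
Lemma standard_resultant_deriv_neq0 Phi : standard Phi -> resultant Phi Phi^`() != 0.
Proof.
move=> st; apply/negP; rewrite resultant_eq0 => nontrivial_gcd.
have : separable_poly Phi.
  apply/separable_polyP; split.
    by apply/poly_square_freeP => P sP; exact: standard_sqr_ndvdp.
  move=> P _ sP; have m_neq0 : (size P).-1%:R != 0 :> {poly C}.
    by rewrite pnatr_poly_eq0; case: (size P) sP => [|[|]].
  rewrite -lead_coef_eq0 lead_coef_deriv // -mulr_natr mulf_neq0 //.
  by rewrite lead_coef_eq0 -size_poly_gt0 ltnW.
by rewrite unlock /coprimep gtn_eqF.
Qed.

(* Specialization at a nondefective [u] commutes with the resultant. *)
Lemma specX_double_root_resultant Phi u v : (lead_coef Phi).[u] != 0 ->
  ('X - v%:P) ^+ 2 %| specX Phi u -> (resultant Phi Phi^`()).[u] = 0.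
Proof.
move=> lc_u dvd_v2; set p := specX Phi u.
have sp : size p = size Phi by rewrite /p specXE size_map_poly_id0.
have p0 : p != 0.
  rewrite -size_poly_eq0 sp size_poly_eq0 -lead_coef_eq0.
  by apply: contraNneq lc_u => ->; rewrite horner0.
have s3 : (3 <= size Phi)%N.
  by rewrite -sp; have := dvdp_leq p0 dvd_v2; rewrite size_exp_XsubC.
have m_neq0 : (size Phi).-1%:R != 0 :> {poly C}.
  by rewrite pnatr_poly_eq0; case: (size Phi) s3 => [|[|]].
have lcd_u : (lead_coef Phi^`()).[u] != 0.
  rewrite lead_coef_deriv // hornerMn mulrn_eq0 negb_or lc_u andbT.
  by case: (size Phi) s3 => [|[|]].
change (horner_eval u (resultant Phi Phi^`()) = 0).
rewrite (@map_resultant _ _ (horner_eval u) Phi Phi^`() lc_u lcd_u).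
apply/eqP; rewrite resultant_eq0 -deriv_map -/(specX Phi u) -/p.
have dvd_p : 'X - v%:P %| p by apply: dvdp_trans dvd_v2; rewrite dvdp_exp.
have dvd_dp : 'X - v%:P %| p^`().
  move: dvd_v2 => /dvdpP [r Ep]; rewrite /p Ep expr2 !derivM derivXsubC mul1r mulr1.
  by rewrite dvdp_add // dvdp_mull // ?dvdp_mulr // dvdp_add.
have g0 : gcdp p p^`() != 0 by rewrite gcdp_eq0 negb_and p0.
have := dvdp_leq g0 (_ : 'X - v%:P %| gcdp p p^`()).
by rewrite size_XsubC dvdp_gcd dvd_p dvd_dp => /(_ isT).
Qed.

Lemma singular_vertices_finite Phi : standard Phi ->
  exists S : seq C, forall w, singular_vertex Phi w -> w \in S.
Proof.
move=> st; have [_ diag_neq0 _ _] := st.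
have lc0 : lead_coef Phi != 0.
  by rewrite lead_coef_eq0; apply: contraNneq diag_neq0 => ->; rewrite horner0.
have [S1 loops] := roots_in_seq diag_neq0.
have [S2 defective] := roots_in_seq lc0.
have [S3 multiple] := roots_in_seq (standard_resultant_deriv_neq0 st).
exists (S1 ++ S2 ++ S3) => w [|[v dvd_v2]|/eqP lc_w]; rewrite !mem_cat.
- by rewrite evalXY_diag => /eqP/loops ->.
- have [lc_w|lc_w] := eqVneq (lead_coef Phi).[w] 0.
    by rewrite defective ?orbT //; apply/eqP.
  by rewrite multiple ?orbT //; apply/eqP; exact: specX_double_root_resultant dvd_v2.
- by rewrite defective ?orbT.
Qed.

End PhiAlgebra.

Section Components.
Variable R : realType.
Local Notation C := (R[i]).
Variable Phi : {poly {poly C}}.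
Local Notation reach := (reachG Phi).

Lemma reach_refl u : reach u u.
Proof. exact: rt_refl. Qed.

Lemma reach_step u v : adjG Phi u v -> reach u v.
Proof. exact: rt_step. Qed.

Lemma reach_trans u v w : reach u v -> reach v w -> reach u w.
Proof. exact: rt_trans. Qed.

Lemma Gstar_vertex_reach u v : Gstar_vertex Phi u -> reach u v -> Gstar_vertex Phi v.
Proof. by move=> Gu uv [w [vw sw]]; apply: Gu; exists w; split => //; apply: reach_trans vw. Qed.

Hypothesis sym : symmetricXY Phi.

Lemma adjG_sym u v : adjG Phi u v -> adjG Phi v u.
Proof. by rewrite /adjG evalXY_sym. Qed.

Lemma reachG_sym u v : reach u v -> reach v u.
Proof.
elim=> [x y /adjG_sym /reach_step //|x|x y z _ yx _ zy]; first exact: reach_refl.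
exact: reach_trans zy yx.
Qed.

Hypothesis st : standard Phi.

Definition neighbours w : seq C := sval (closed_field_poly_normal (specX Phi w)).

Lemma neighboursP w v : adjG Phi w v -> v \in neighbours w.
Proof.
rewrite /adjG /evalXY /neighbours; case: closed_field_poly_normal => r /= ->.
rewrite hornerZ => /eqP; rewrite mulf_eq0 lead_coef_eq0 (negbTE (standard_specX_neq0 _ st)).
by move/eqP/rootP; rewrite root_prod_XsubC.
Qed.

Fixpoint within_steps (s : seq C) k : seq C :=
  if k is k'.+1 then within_steps s k' ++ flatten (map neighbours (within_steps s k'))
  else s.

Lemma reach_within_steps s w v : reach w v ->
  forall k, w \in within_steps s k -> exists k', v \in within_steps s k'.
Proof.
elim=> [x y xy|x|x y z _ IHxy _ IHyz] k x_k.
- exists k.+1; rewrite /= mem_cat; apply/orP; right.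
  by apply/flatten_mapP; exists x => //; apply: neighboursP.
- by exists k.
- by have [k1 y_k1] := IHxy k x_k; exact: IHyz y_k1.
Qed.

(* The component of a generic vertex avoids [s] and the singular vertices:
   their components are countable, but C is not. *)
Lemma exists_Gstar_vertex_far (s : seq C) :
  exists u, Gstar_vertex Phi u /\ forall w, reach u w -> w \notin s.
Proof.
have [S singular_S] := singular_vertices_finite st.
pose L := s ++ S.
pose f m := if @unpickle (nat * nat)%type m is Some (k, j) then nth 0 (within_steps L k) j else 0.
have [x miss_x] := complex_not_enumerable f.
have far_x w : w \in L -> ~ reach x w.
  move=> wL /reachG_sym wx; have [k x_k] := reach_within_steps wx (k := 0) wL.
  have := miss_x (pickle (k, index x (within_steps L k))).
  by rewrite /f pickleK nth_index // eqxx.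
exists x; split => [[w [xw sw]]|w xw].
  by apply: (far_x w) => //; rewrite mem_cat singular_S ?orbT.
by apply/negP => ws; apply: (far_x w) => //; rewrite mem_cat ws.
Qed.

End Components.

Section Formulas.
Variable F : unitRingType.
Local Notation term := (GRing.term F).
Local Notation formula := (GRing.formula F).

Fixpoint horner_term (s : seq F) (t : term) : term :=
  if s is a :: s' then GRing.Add (GRing.Mul (horner_term s' t) t) (GRing.Const a)
  else GRing.Const 0.

Lemma eval_horner_term e (p : {poly F}) t :
  GRing.eval e (horner_term p t) = p.[GRing.eval e t].
Proof. by rewrite /horner; elim: (polyseq p) => //= a s ->. Qed.

Definition big_and (l : seq formula) := foldr (@GRing.And F) (GRing.Bool true) l.
Definition big_or (l : seq formula) := foldr (@GRing.Or F) (GRing.Bool false) l.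

Lemma holds_big_and (I : eqType) e (s : seq I) (g : I -> formula) :
  GRing.holds e (big_and (map g s)) <-> (forall i, i \in s -> GRing.holds e (g i)).
Proof.
elim: s => [|i s IH] /=; first by split.
split => [[gi /IH gs] j|gs]; first by rewrite in_cons => /predU1P [->|/gs].
by split; [apply: gs; rewrite mem_head | apply/IH => j js; apply: gs; rewrite in_cons js orbT].
Qed.

Lemma holds_big_or (I : eqType) e (s : seq I) (g : I -> formula) :
  GRing.holds e (big_or (map g s)) <-> (exists2 i, i \in s & GRing.holds e (g i)).
Proof.
elim: s => [|i s IH] /=; first by split => // [[]].
split => [[gi|/IH [j js gj]]|[j]]; first by exists i; rewrite ?mem_head.
  by exists j; rewrite // in_cons js orbT.
by rewrite in_cons => /predU1P [->|js gj]; [left | right; apply/IH; exists j].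
Qed.

Lemma set_nth_size (e : seq F) y : set_nth 0 e (size e) y = rcons e y.
Proof. by elim: e => //= a e ->. Qed.

Lemma holds_exists_iota k (e : seq F) (f : formula) :
  GRing.holds e (foldr (@GRing.Exists F) f (iota (size e) k)) <->
  exists2 s, size s = k & GRing.holds (e ++ s) f.
Proof.
elim: k e => [|k IH] e /=.
  by split => [ef|[[|//] _]]; [exists [::]; rewrite ?cats0 | rewrite cats0].
split => [[y]|[[|y s] //= [sk] ef]].
  rewrite set_nth_size; have <- : size (rcons e y) = (size e).+1 by rewrite size_rcons.
  by move/IH => [s sk ef]; exists (y :: s); rewrite /= ?sk // -cat_rcons.
exists y; rewrite set_nth_size; have <- : size (rcons e y) = (size e).+1 by rewrite size_rcons.
by apply/IH; exists s; rewrite // cat_rcons.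
Qed.

End Formulas.

Section ComponentIsoFormula.
Variable R : realType.
Local Notation C := (R[i]).
Local Notation term := (GRing.term C).
Local Notation formula := (GRing.formula C).
Variable Phi : {poly {poly C}}.
Variables (T : finType) (e : rel T).
Local Notation ts := (enum T).
Local Notation n := (size (enum T)).

(* [g] maps [H] isomorphically onto a union of components of [G(Phi)], and [a] to [x];
   for connected [H] this union is the component of [x]. *)
Definition component_iso (a : T) (x : C) := exists g : T -> C,
  [/\ injective g, g a = x, forall b c, e b c <-> adjG Phi (g b) (g c)
    & forall b z, adjG Phi (g b) z -> exists c, g c = z].

Fixpoint evalXY_term (s : seq {poly C}) (tu tv : term) : term :=
  if s is q :: s' then GRing.Add (GRing.Mul (evalXY_term s' tu tv) tv) (horner_term q tu)
  else GRing.Const 0.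

Definition adj_formula (tu tv : term) : formula :=
  GRing.Equal (evalXY_term Phi tu tv) (GRing.Const 0).

Lemma eval_evalXY_term env tu tv :
  GRing.eval env (evalXY_term Phi tu tv) = evalXY Phi (GRing.eval env tu) (GRing.eval env tv).
Proof.
rewrite /evalXY /specX map_polyE horner_Poly.
by elim: (polyseq Phi) => //= q s ->; rewrite eval_horner_term.
Qed.

(* Variable [0] stands for [x], variable [(index b ts).+1] for the image of [b],
   and variable [n.+1] for a neighbour [z]. *)
Definition vertex_var (b : T) : term := @GRing.Var C (index b ts).+1.
Local Notation z_var := (@GRing.Var C n.+1).

Definition root_formula (a : T) : formula := GRing.Equal (vertex_var a) (@GRing.Var C 0).

Definition edges_formula : formula :=
  big_and [seq big_and [seq if e b c then adj_formula (vertex_var b) (vertex_var c)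
                            else GRing.Not (adj_formula (vertex_var b) (vertex_var c))
                        | c <- ts] | b <- ts].

Definition injective_formula : formula :=
  big_and [seq big_and [seq if b == c then GRing.Bool true
                            else GRing.Not (GRing.Equal (vertex_var b) (vertex_var c))
                        | c <- ts] | b <- ts].

Definition closed_formula : formula :=
  GRing.Forall n.+1 (big_and [seq GRing.Implies (adj_formula (vertex_var b) z_var)
                                    (big_or [seq GRing.Equal z_var (vertex_var c) | c <- ts])
                              | b <- ts]).

Definition component_iso_formula (a : T) : formula :=
  foldr (@GRing.Exists C)
    (GRing.And (root_formula a)
      (GRing.And edges_formula (GRing.And injective_formula closed_formula)))
    (iota 1 n).

Lemma nth_map_index (g : T -> C) b : (map g ts)`_(index b ts) = g b.
Proof. by rewrite (nth_map b) ?index_mem ?mem_enum // nth_index ?mem_enum. Qed.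

Lemma nth_rcons_map_index (g : T -> C) z b : (rcons (map g ts) z)`_(index b ts) = g b.
Proof. by rewrite nth_rcons size_map index_mem mem_enum nth_map_index. Qed.

Lemma holds_root_formula x (g : T -> C) a :
  GRing.holds (x :: map g ts) (root_formula a) <-> g a = x.
Proof. by rewrite /= nth_map_index. Qed.

Lemma holds_edges_formula x (g : T -> C) :
  GRing.holds (x :: map g ts) edges_formula <-> forall b c, e b c <-> adjG Phi (g b) (g c).
Proof.
rewrite holds_big_and; split=> [edges b c | edges b _].
  have /holds_big_and /(_ c (mem_enum _ c)) := edges b (mem_enum _ b).
  case: (e b c) => /=; rewrite eval_evalXY_term /= !nth_map_index.
    by move=> adj; split=> // _.
  by move=> nadj; split=> // /nadj.
apply/holds_big_and => c _; have := edges b c.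
case: (e b c) => [[adj _] | [_ nadj]]; rewrite /= eval_evalXY_term /= !nth_map_index.
  exact: adj.
by move/nadj.
Qed.

Lemma holds_injective_formula x (g : T -> C) :
  GRing.holds (x :: map g ts) injective_formula <-> injective g.
Proof.
rewrite holds_big_and; split=> [inj b c gbc | ginj b _].
  have /holds_big_and /(_ c (mem_enum _ c)) := inj b (mem_enum _ b).
  by case: eqVneq => //= _; rewrite !nth_map_index.
apply/holds_big_and => c _; case: eqVneq => //= b_neq_c.
by rewrite !nth_map_index => /ginj /eqP; rewrite (negbTE b_neq_c).
Qed.

Lemma holds_closed_formula x (g : T -> C) :
  GRing.holds (x :: map g ts) closed_formula <->
  forall b z, adjG Phi (g b) z -> exists c, g c = z.
Proof.
have nth_z z : (rcons (map g ts) z)`_n = z by rewrite -[n](size_map g) nth_rcons ltnn eqxx.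
have envE z : set_nth 0 (x :: map g ts) n.+1 z = x :: rcons (map g ts) z.
  by rewrite /= -[n](size_map g) set_nth_size.
split=> [closed b z | closed z].
  have /holds_big_and /(_ b (mem_enum _ b)) := closed z; rewrite envE.
  rewrite /= eval_evalXY_term /= nth_rcons_map_index nth_z => /[apply].
  by move/holds_big_or => [c _]; rewrite /= nth_rcons_map_index nth_z; exists c.
rewrite envE; apply/holds_big_and => b _.
rewrite /= eval_evalXY_term /= nth_rcons_map_index nth_z => /closed [c gc].
by apply/holds_big_or; exists c; rewrite ?mem_enum //= nth_rcons_map_index nth_z.
Qed.

Lemma seq_as_map (b0 : T) (ys : seq C) :
  size ys = n -> ys = map (fun b => nth 0 ys (index b ts)) ts.
Proof.
move=> sys; apply: (@eq_from_nth _ 0) => [|i i_lt]; first by rewrite size_map.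
by rewrite (nth_map b0) -?sys // index_uniq ?enum_uniq // -sys.
Qed.

Lemma component_iso_formulaP a x :
  GRing.holds [:: x] (component_iso_formula a) <-> component_iso a x.
Proof.
rewrite /component_iso_formula [iota 1 n]/(iota (size [:: x]) n) holds_exists_iota.
split=> [[ys /(seq_as_map a) -> [/holds_root_formula gax [/holds_edges_formula edges
           [/holds_injective_formula ginj /holds_closed_formula closed]]]] |
         [g [ginj gax edges closed]]].
  by exists (fun b => ys`_(index b ts)).
exists (map g ts); first by rewrite size_map.
split; first exact/holds_root_formula.
split; first exact/holds_edges_formula.
by split; [exact/holds_injective_formula | exact/holds_closed_formula].
Qed.

End ComponentIsoFormula.

Lemma perm_of_codom_sub (T : finType) (V : eqType) (g h : T -> V) :
  injective g -> (forall t, g t \in codom h) -> exists s : {perm T}, forall t, h (s t) = g t.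
Proof.
move=> ginj g_h; pose s t := odflt t [pick c | h c == g t].
have hs t : h (s t) = g t.
  rewrite /s; case: pickP => [c /eqP //|no_c].
  by have /codomP [c gc] := g_h t; move: (no_c c); rewrite gc eqxx.
have sinj : injective s by move=> x y sxy; apply: ginj; rewrite -!hs sxy.
by exists (perm sinj) => t; rewrite permE.
Qed.

Section SwapImages.
Variables (V : eqType) (T : finType).
Implicit Types p q : T -> V.

Definition swap_images p q (x : V) : V :=
  if [pick t | p t == x] is Some t then q t
  else if [pick t | q t == x] is Some t then p t else x.

Variant swap_images_spec p q x : V -> Type :=
| SwapImages1 t of x = p t : swap_images_spec p q x (q t)
| SwapImages2 t of x = q t & x \notin codom p : swap_images_spec p q x (p t)
| SwapImagesOut of x \notin codom p & x \notin codom q : swap_images_spec p q x x.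

Lemma swap_imagesP p q x : swap_images_spec p q x (swap_images p q x).
Proof.
rewrite /swap_images; case: pickP => [t /eqP <-|no_p]; first exact: SwapImages1.
have x_p : x \notin codom p by apply/codomP => -[t xt]; move: (no_p t); rewrite xt eqxx.
case: pickP => [t /eqP qtx|no_q]; first by rewrite -qtx in x_p *; exact: SwapImages2 x_p.
by apply: SwapImagesOut => //; apply/codomP => -[t xt]; move: (no_q t); rewrite xt eqxx.
Qed.

Lemma swap_images_in (P : V -> Prop) p q x :
  (forall t, P (p t)) -> (forall t, P (q t)) -> P x -> P (swap_images p q x).
Proof. by move=> Pp Pq Px; case: swap_imagesP. Qed.

Variables (adj : V -> V -> Prop) (p q : T -> V).
Hypotheses (pinj : injective p) (qinj : injective q).
Hypothesis p_closed : forall x y, adj x y -> (x \in codom p) = (y \in codom p).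
Hypothesis q_closed : forall x y, adj x y -> (x \in codom q) = (y \in codom q).
Hypothesis codom_overlap : forall x, x \in codom p -> x \in codom q -> codom p =i codom q.
Hypothesis pq_iso : forall s t, adj (p s) (p t) <-> adj (q s) (q t).

Lemma swap_images_p t : swap_images p q (p t) = q t.
Proof. by case: swap_imagesP => [s /pinj -> | s _ | ] //; rewrite codom_f. Qed.

Lemma swap_images_q t : q t \notin codom p -> swap_images p q (q t) = p t.
Proof. by case: swap_imagesP => [s -> | s /qinj -> | ] //; rewrite codom_f. Qed.

Lemma swap_images_out x : x \notin codom p -> x \notin codom q -> swap_images p q x = x.
Proof. by case: swap_imagesP => [s -> | s -> | //]; rewrite codom_f. Qed.

Lemma swap_imagesK : cancel (swap_images p q) (swap_images q p).
Proof.
move=> x; case: (swap_imagesP p q x) => [t ->|t -> qt_p|x_p x_q].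
- by case: swap_imagesP => [s /qinj -> | s _ | ]; rewrite ?codom_f.
- have pt_q : p t \notin codom q.
    by apply: contra qt_p => pt_q; rewrite (codom_overlap (codom_f p t) pt_q (q t)) codom_f.
  case: swap_imagesP => [s eq_s | s /pinj -> // | _]; last by rewrite codom_f.
  by move: pt_q; rewrite eq_s codom_f.
- by case: swap_imagesP => [s eq_s | s eq_s |] //; [move: x_q | move: x_p]; rewrite eq_s codom_f.
Qed.

Lemma swap_images_adj x y : adj x y -> adj (swap_images p q x) (swap_images p q y).
Proof.
case: (swap_imagesP p q x) => [s -> | s -> x_p | x_p x_q] xy.
- have /codomP [t y_t] : y \in codom p by rewrite -(p_closed xy) codom_f.
  by rewrite y_t swap_images_p; apply/pq_iso; rewrite -y_t.
- have /codomP [t y_t] : y \in codom q by rewrite -(q_closed xy) codom_f.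
  have y_p : y \notin codom p by rewrite -(p_closed xy).
  rewrite y_t swap_images_q; last by rewrite -y_t.
  by apply/pq_iso; rewrite -y_t.
- by rewrite swap_images_out // -?(p_closed xy) -?(q_closed xy).
Qed.

End SwapImages.

Lemma swap_images_iso (V : eqType) (T : finType) (adj : V -> V -> Prop) (p q : T -> V) :
  injective p -> injective q ->
  (forall x y, adj x y -> (x \in codom p) = (y \in codom p)) ->
  (forall x y, adj x y -> (x \in codom q) = (y \in codom q)) ->
  (forall x, x \in codom p -> x \in codom q -> codom p =i codom q) ->
  (forall s t, adj (p s) (p t) <-> adj (q s) (q t)) ->
  [/\ cancel (swap_images p q) (swap_images q p), cancel (swap_images q p) (swap_images p q)
    & forall x y, adj (swap_images p q x) (swap_images p q y) <-> adj x y].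
Proof.
move=> pinj qinj p_closed q_closed overlap pq_iso.
have qp_overlap x : x \in codom q -> x \in codom p -> codom q =i codom p.
  by move=> x_q x_p z; rewrite (overlap x x_p x_q).
have qp_iso s t : adj (q s) (q t) <-> adj (p s) (p t) by apply: iff_sym.
have K := swap_imagesK pinj qinj overlap; have KV := swap_imagesK qinj pinj qp_overlap.
split=> // x y; split; last exact: swap_images_adj.
by move/(swap_images_adj qinj pinj q_closed p_closed qp_iso); rewrite !K.
Qed.

Section MainTheorem.
Variable R : realType.
Local Notation C := (R[i]).
Variables (Phi : {poly {poly C}}) (T : finType) (e : rel T).
Local Notation reach := (reachG Phi).
Local Notation spans u f := (forall v, reach u v <-> exists a, f a = v).

Lemma component_iso_of_iso u (f : T -> C) :
  [/\ injective f, spans u f & forall a b, e a b <-> adjG Phi (f a) (f b)] ->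
  forall b, component_iso Phi e b (f b).
Proof.
move=> [finj f_reach f_edges] b; exists f; split => // c z fc_z.
by apply/f_reach; apply: reach_trans (reach_step fc_z); apply/f_reach; exists c.
Qed.

Lemma reach_closed_codom (g : T -> C) x y :
  (forall b z, adjG Phi (g b) z -> exists c, g c = z) ->
  reach x y -> x \in codom g -> y \in codom g.
Proof.
move=> g_closed; elim=> [z w zw /codomP [b zb] | // | z w z' _ IHzw _ IHwz' /IHzw /IHwz' //].
by rewrite zb in zw; have [c <-] := g_closed b w zw; exact: codom_f.
Qed.

Hypothesis sym : symmetricXY Phi.

Lemma codom_reach u (f : T -> C) : spans u f -> forall x, x \in codom f <-> reach u x.
Proof.
move=> f_reach x; rewrite f_reach.
by split => [/codomP [a ->]|[a <-]]; [exists a | exact: codom_f].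
Qed.

Lemma codom_reach_closed u (f : T -> C) : spans u f ->
  forall x y, adjG Phi x y -> (x \in codom f) = (y \in codom f).
Proof.
move=> f_reach x y xy; apply/idP/idP => /(codom_reach f_reach) ux; apply/(codom_reach f_reach).
  exact: reach_trans ux (reach_step xy).
exact: reach_trans ux (reach_step (adjG_sym sym xy)).
Qed.

Lemma codom_reach_overlap u v (f g : T -> C) : spans u f -> spans v g ->
  forall x, x \in codom f -> x \in codom g -> codom f =i codom g.
Proof.
move=> f_reach g_reach x /(codom_reach f_reach) ux /(codom_reach g_reach) vx y.
apply/idP/idP => [/(codom_reach f_reach) uy | /(codom_reach g_reach) vy].
  exact/(codom_reach g_reach)/(reach_trans vx)/(reach_trans (reachG_sym sym ux)).
exact/(codom_reach f_reach)/(reach_trans ux)/(reach_trans (reachG_sym sym vx)).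
Qed.

Hypothesis conn : connected_graph e.

Lemma reach_iso_image (g : T -> C) a c :
  (forall b c, e b c <-> adjG Phi (g b) (g c)) -> reach (g a) (g c).
Proof.
move=> g_edges; have [_ /(_ a c) /connectP [path_ac path_e ->]] := conn.
elim: path_ac a path_e => [|b path_bc IH] a /=; first by move=> _; exact: reach_refl.
by case/andP => /g_edges ab /IH; apply: reach_trans (reach_step ab).
Qed.

Hypotheses (st : standard Phi) (strong : strongly_Phi_polynomial e Phi).

Lemma component_iso_cofinite c :
  exists s : seq C, forall x, x \notin s -> component_iso Phi e c x.
Proof.
have [s [cofinite | finite]] := definable_finite_or_cofinite (component_iso_formula Phi e c).
  by exists s => x /cofinite /component_iso_formulaP.
have [u [Gu far_u]] := exists_Gstar_vertex_far sym st s.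
have [f iso_f] := strong Gu; have [_ f_reach _] := iso_f.
have /far_u /negP[] : reach u (f c) by apply/f_reach; exists c.
by apply: finite; apply/component_iso_formulaP; exact: (component_iso_of_iso iso_f c).
Qed.

Lemma H_vertex_transitive : vertex_transitive e.
Proof.
move=> a b.
have [sa iso_a] := component_iso_cofinite a; have [sb iso_b] := component_iso_cofinite b.
have [u [_ far_u]] := exists_Gstar_vertex_far sym st (sa ++ sb).
have /far_u := reach_refl Phi u; rewrite mem_cat negb_or => /andP [u_a u_b].
have [g [ginj gau g_edges _]] := iso_a u u_a.
have [h [hinj hbu h_edges h_closed]] := iso_b u u_b.
have [s hs] : exists s : {perm T}, forall t, h (s t) = g t.
  apply: perm_of_codom_sub ginj _ => t.
  apply: (reach_closed_codom (x := u) h_closed); last by rewrite -hbu codom_f.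
  by rewrite -gau; exact: reach_iso_image.
exists s; split => [x y|]; last by apply: hinj; rewrite hs gau hbu.
apply/idP/idP => exy; first by apply/g_edges; rewrite -!hs; apply/h_edges.
by apply/h_edges; rewrite !hs; apply/g_edges.
Qed.

Lemma Gstar_transitive : Gstar_vertex_transitive Phi.
Proof.
move=> u v Gu Gv.
have [fu [fu_inj fu_reach fu_edges]] := strong Gu.
have [fv [fv_inj fv_reach fv_edges]] := strong Gv.
have [a0 fu_a0] : exists a0, fu a0 = u by apply/fu_reach; exact: reach_refl.
have [b0 fv_b0] : exists b0, fv b0 = v by apply/fv_reach; exact: reach_refl.
have [s [s_edges s_a0]] := H_vertex_transitive a0 b0.
pose q t := fv (s t).
have q_inj : injective q by move=> x y /fv_inj /perm_inj.
have q_reach : spans v q.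
  move=> x; rewrite fv_reach; split => [[a <-]|[a <-]]; last by exists (s a).
  by exists ((s^-1)%g a); rewrite /q permKV.
have fu_q_iso x y : adjG Phi (fu x) (fu y) <-> adjG Phi (q x) (q y).
  by rewrite -fu_edges -fv_edges s_edges.
have [K KV adjE] := swap_images_iso fu_inj q_inj (codom_reach_closed fu_reach)
  (codom_reach_closed q_reach) (codom_reach_overlap fu_reach q_reach) fu_q_iso.
have G_fu t : Gstar_vertex Phi (fu t).
  by apply: Gstar_vertex_reach Gu _; apply/fu_reach; exists t.
have G_q t : Gstar_vertex Phi (q t).
  by apply: Gstar_vertex_reach Gv _; apply/q_reach; exists t.
exists (swap_images fu q); split; last by rewrite -fu_a0 swap_images_p // /q s_a0.
split=> [x Gx | x y _ _ /(congr1 (swap_images q fu)) | y Gy | x y _ _].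
- exact: swap_images_in.
- by rewrite !K.
- by exists (swap_images q fu y); [exact: swap_images_in | rewrite KV].
- exact: adjE.
Qed.

End MainTheorem.

Theorem mainTheorem6 (R : realType) (Phi : {poly {poly R[i]}}) (d : nat)
    (T : finType) (e : rel T) :
  standard Phi -> symmetricXY Phi -> partial_degree Phi d ->
  simple_graph e -> connected_graph e -> regular_graph e d ->
  strongly_Phi_polynomial e Phi ->
  Gstar_vertex_transitive Phi /\ vertex_transitive e.
Proof.
move=> st sym _ _ conn _ strong.
split; first exact: (Gstar_transitive sym conn st strong).
exact: (H_vertex_transitive sym conn st strong).
Qed.
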